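(* Let $m\ge1$, $n\in\mathbb{Z}$, and let $B=(b_0,\ldots,b_{m-1})$ and $T=(t_0,\ldots,t_{m-1})$ be sequences of integers with $\sum_i b_i\ge n$ and $\sum_i t_i=n+m-1$. Then for every $l\in\{1,\ldots,m\}$ there exists $i\in\{0,\ldots,m-1\}$ such that for every $l'\in\{1,\ldots,l\}$, $$\sum_{j=i}^{i+l'-1}b_j\ge 1-l'+\sum_{j=i}^{i+l'-1}t_j.$$
   Context: Indices of $B$ and $T$ are taken modulo $m$ (ring arrangement). *)

(* integers Z. Sequences of length m are functions nat -> Z,
   read only at indices 0..m-1; indices in window sums are taken modulo m. *)
From Stdlib Require Import ZArith Arith.
Open Scope Z_scope.

Fixpoint zsum (f : nat -> Z) (k : nat) : Z :=
  match k with
  | O => 0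
  | S k' => zsum f k' + f k'
  end.

Definition cyc_sum (m : nat) (s : nat -> Z) (i l : nat) : Z :=
  zsum (fun j => s ((i + j) mod m)%nat) l.

(* Cycle lemma: the sequence d_j = b_j - t_j + 1, extended m-periodically, has
   total sum at least 1 over a period.  Starting just after the last minimum
   (within one period) of its prefix sums, every window of length at most m
   has positive sum: windows ending inside the period end above the minimum,
   and windows wrapping around gain the whole period sum, which is positive. *)
From Stdlib Require Import ZArith Arith Lia.
Open Scope Z_scope.

Lemma zsum_ext (f g : nat -> Z) (k : nat) :
  (forall j, (j < k)%nat -> f j = g j) -> zsum f k = zsum g k.
Proof.
  induction k as [|k IH]; simpl; intros Hfg; [reflexivity|].
  rewrite IH, Hfg; [reflexivity | lia | intros j Hj; apply Hfg; lia].
Qed.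

Lemma zsum_add (f : nat -> Z) (i l : nat) :
  zsum f (i + l) = zsum f i + zsum (fun j => f (i + j)%nat) l.
Proof.
  induction l as [|l IH]; simpl.
  - rewrite Nat.add_0_r. lia.
  - rewrite Nat.add_succ_r. simpl. rewrite IH. lia.
Qed.

Lemma zsum_sub_add1 (f g : nat -> Z) (k : nat) :
  zsum (fun j => f j - g j + 1) k = zsum f k - zsum g k + Z.of_nat k.
Proof. induction k as [|k IH]; simpl; [reflexivity|]. rewrite IH. lia. Qed.

Lemma zsum_periodic (f : nat -> Z) (m k : nat) :
  (forall j, f (m + j)%nat = f j) -> zsum f (m + k) = zsum f m + zsum f k.
Proof.
  intros Hper. rewrite zsum_add. f_equal. apply zsum_ext. intros j _. apply Hper.
Qed.

Lemma exists_last_argmin (F : nat -> Z) (m : nat) : (1 <= m)%nat ->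
  exists i, (i < m)%nat /\ (forall k, (k < m)%nat -> F i <= F k) /\
    (forall k, (i < k < m)%nat -> F i < F k).
Proof.
  induction m as [|m IH]; intros Hm; [lia|].
  destruct (Nat.eq_dec m 0) as [->|Hm0].
  { exists 0%nat. split; [lia|]. split; intros k Hk; [replace k with 0%nat by lia|]; lia. }
  destruct IH as [i [Hi [Hmin Hlast]]]; [lia|].
  destruct (Z_le_gt_dec (F m) (F i)) as [Hle|Hgt].
  - exists m. split; [lia|]. split; [|intros; lia].
    intros k Hk. destruct (Nat.eq_dec k m) as [->|Hkm]; [lia|].
    specialize (Hmin k ltac:(lia)). lia.
  - exists i. split; [lia|].
    split; intros k Hk; (destruct (Nat.eq_dec k m) as [->|Hkm]; [lia|]).
    + apply Hmin. lia.
    + apply Hlast. lia.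
Qed.

Lemma cycle_lemma (f : nat -> Z) (m : nat) :
  (1 <= m)%nat -> (forall j, f (m + j)%nat = f j) -> 0 < zsum f m ->
  exists i, (i < m)%nat /\
    forall l, (1 <= l <= m)%nat -> 0 < zsum (fun j => f (i + j)%nat) l.
Proof.
  intros Hm Hper Hpos.
  destruct (exists_last_argmin (zsum f) m Hm) as [i [Hi [Hmin Hlast]]].
  exists i. split; [exact Hi|]. intros l Hl.
  enough (zsum f i < zsum f (i + l)) by (rewrite zsum_add in *; lia).
  destruct (Nat.lt_ge_cases (i + l) m) as [Hin|Hwrap].
  - apply Hlast. lia.
  - replace (i + l)%nat with (m + (i + l - m))%nat by lia.
    rewrite zsum_periodic by exact Hper.
    specialize (Hmin (i + l - m)%nat ltac:(lia)). lia.
Qed.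

Theorem mainTheorem7 (m : nat) (n : Z) (b t : nat -> Z)
  (hm : (1 <= m)%nat)
  (hb : zsum b m >= n)
  (ht : zsum t m = n + Z.of_nat m - 1) :
  forall l : nat, (1 <= l <= m)%nat ->
  exists i : nat, (i < m)%nat /\
    forall l' : nat, (1 <= l' <= l)%nat ->
      cyc_sum m b i l' >= 1 - Z.of_nat l' + cyc_sum m t i l'.
Proof.
  intros l Hl.
  set (d := fun j : nat => b (j mod m)%nat - t (j mod m)%nat + 1).
  assert (Hper : forall j, d (m + j)%nat = d j).
  { intros j. unfold d. replace (m + j)%nat with (j + 1 * m)%nat by lia.
    rewrite Nat.Div0.mod_add. reflexivity. }
  assert (Hpos : 0 < zsum d m).
  { rewrite (zsum_ext d (fun j => b j - t j + 1)), zsum_sub_add1; [lia|].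
    intros j Hj. unfold d. rewrite Nat.mod_small by lia. reflexivity. }
  destruct (cycle_lemma d m hm Hper Hpos) as [i [Hi Hwin]].
  exists i. split; [exact Hi|]. intros l' Hl'.
  specialize (Hwin l' ltac:(lia)).
  unfold cyc_sum. unfold d in Hwin. rewrite zsum_sub_add1 in Hwin. lia.
Qed.
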